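(* Let $I$ be an ideal of $\mathbb{C}[K^{\pm1},C_1]$ and let $w=\sum_{(j,k,l)\in\mathbb{Z}_+\times\mathbb{Z}_+\times\mathbb{Z}}F_2^jF_3^kK_2^lQ_{j,k,l}v_\eta$, where $Q_{j,k,l}\in\mathbb{C}[K^{\pm1},C_1]$ and only finitely many are nonzero. Then $w\in W(\eta,I)$ if and only if $Q_{j,k,l}\in I$ for all $(j,k,l)$.
   Context: Fix $q\in\mathbb{C}\setminus\{0\}$ not a root of unity. $U=U_q(\mathfrak{sl}_3)$ is the associative $\mathbb{C}$-algebra generated by $E_1,E_2,F_1,F_2,K_1^{\pm1},K_2^{\pm1}$ subject to $K_iK_i^{-1}=K_i^{-1}K_i=1$, $K_1K_2=K_2K_1$, $[E_i,F_j]=\delta_{ij}\frac{K_i-K_i^{-1}}{q-q^{-1}}$, $K_iE_jK_i^{-1}=q^{a_{ij}}E_j$, $K_iF_jK_i^{-1}=q^{-a_{ij}}F_j$ for $i,j\in\{1,2\}$ with $a_{11}=a_{22}=2$, $a_{12}=a_{21}=-1$, and the quantum Serre relations $E_i^2E_j-(q+q^{-1})E_iE_jE_i+E_jE_i^2=0$, $F_i^2F_j-(q+q^{-1})F_iF_jF_i+F_jF_i^2=0$ for $i\neq j$. Let $U^+$ be the subalgebra generated by $E_1,E_2$, and $F_3=F_1F_2-qF_2F_1$. Fix $\alpha\in\mathbb{C}\setminus\{0\}$ and let $\eta:U^+\to\mathbb{C}$ be the algebra homomorphism with $\eta(E_1)=\alpha$, $\eta(E_2)=0$. $M(\eta)=U\otimes_{U^+}\mathbb{C}v_\eta$,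 where $xv_\eta=\eta(x)v_\eta$ for $x\in U^+$. Put $K=K_1K_2^2$, $C_1=F_1E_1+\frac{qK_1+q^{-1}K_1^{-1}}{(q-q^{-1})^2}$; $\mathbb{C}[K^{\pm1},C_1]$ is the commutative subalgebra they generate. For an ideal $I$ of $\mathbb{C}[K^{\pm1},C_1]$, $W(\eta,I)=U\,Iv_\eta\subseteq M(\eta)$. *)

From HB Require Import structures.
From mathcomp Require Import all_boot all_order all_algebra.
From mathcomp Require Import complex.
From mathcomp Require Import reals.
Set Implicit Arguments. Unset Strict Implicit. Unset Printing Implicit Defensive.
Import Order.TTheory GRing.Theory Num.Theory.
Local Open Scope ring_scope.

Section Uq.
Variable R : realType.
Local Notation C := (R[i]).

Inductive gen := gE1 | gE2 | gF1 | gF2 | gK1 | gK1i | gK2 | gK2i.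

Inductive term :=
| tG of gen
| tC of C
| tAdd of term & term
| tMul of term & term.

Definition tOne := tC 1.
Definition tZero := tC 0.
Definition tSub (x y : term) := tAdd x (tMul (tC (-1)) y).

Fixpoint tpow (t : term) (n : nat) : term :=
  if n is n'.+1 then tMul t (tpow t n') else tOne.

Definition tsum (X : Type) (s : seq X) (f : X -> term) : term :=
  foldr (fun x acc => tAdd (f x) acc) tZero s.

Definition E1 := tG gE1.  Definition E2 := tG gE2.
Definition F1 := tG gF1.  Definition F2 := tG gF2.
Definition K1 := tG gK1.  Definition K1i := tG gK1i.
Definition K2 := tG gK2.  Definition K2i := tG gK2i.

Variable q : C.

Definition tComm a b := tSub (tMul a b) (tMul b a).

Definition serre a b :=
  tAdd (tSub (tMul (tMul a a) b) (tMul (tC (q + q^-1)) (tMul (tMul a b) a)))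
       (tMul b (tMul a a)).

Definition qq := (q - q^-1)^-1.

(* Defining relations of U = U_q(sl_3), as pairs lhs = rhs.
   Cartan matrix: a_ii = 2, a_ij = -1 (i <> j). *)
Inductive urel : term -> term -> Prop :=
| r_K1a : urel (tMul K1 K1i) tOne
| r_K1b : urel (tMul K1i K1) tOne
| r_K2a : urel (tMul K2 K2i) tOne
| r_K2b : urel (tMul K2i K2) tOne
| r_KK  : urel (tMul K1 K2) (tMul K2 K1)
| r_EF11 : urel (tComm E1 F1) (tMul (tC qq) (tSub K1 K1i))
| r_EF22 : urel (tComm E2 F2) (tMul (tC qq) (tSub K2 K2i))
| r_EF12 : urel (tComm E1 F2) tZero
| r_EF21 : urel (tComm E2 F1) tZero
| r_K1E1 : urel (tMul (tMul K1 E1) K1i) (tMul (tC (q ^+ 2)) E1)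
| r_K1E2 : urel (tMul (tMul K1 E2) K1i) (tMul (tC (q ^-1)) E2)
| r_K2E1 : urel (tMul (tMul K2 E1) K2i) (tMul (tC (q ^-1)) E1)
| r_K2E2 : urel (tMul (tMul K2 E2) K2i) (tMul (tC (q ^+ 2)) E2)
| r_K1F1 : urel (tMul (tMul K1 F1) K1i) (tMul (tC (q ^- 2)) F1)
| r_K1F2 : urel (tMul (tMul K1 F2) K1i) (tMul (tC q) F2)
| r_K2F1 : urel (tMul (tMul K2 F1) K2i) (tMul (tC q) F1)
| r_K2F2 : urel (tMul (tMul K2 F2) K2i) (tMul (tC (q ^- 2)) F2)
| r_SE12 : urel (serre E1 E2) tZero
| r_SE21 : urel (serre E2 E1) tZero
| r_SF12 : urel (serre F1 F2) tZero
| r_SF21 : urel (serre F2 F1) tZero.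

(* Equality in U: the congruence generated by the axioms of an associative
   unital C-algebra together with the defining relations.  So U = term / ueq. *)
Inductive ueq : term -> term -> Prop :=
| ue_refl x : ueq x x
| ue_sym x y : ueq x y -> ueq y x
| ue_trans x y z : ueq x y -> ueq y z -> ueq x z
| ue_add x x' y y' : ueq x x' -> ueq y y' -> ueq (tAdd x y) (tAdd x' y')
| ue_mul x x' y y' : ueq x x' -> ueq y y' -> ueq (tMul x y) (tMul x' y')
| ue_addA x y z : ueq (tAdd x (tAdd y z)) (tAdd (tAdd x y) z)
| ue_addC x y : ueq (tAdd x y) (tAdd y x)
| ue_add0 x : ueq (tAdd x tZero) x
| ue_addN x : ueq (tAdd x (tMul (tC (-1)) x)) tZero
| ue_mulA x y z : ueq (tMul x (tMul y z)) (tMul (tMul x y) z)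
| ue_mul1l x : ueq (tMul tOne x) x
| ue_mul1r x : ueq (tMul x tOne) x
| ue_mulDl x y z : ueq (tMul (tAdd x y) z) (tAdd (tMul x z) (tMul y z))
| ue_mulDr x y z : ueq (tMul x (tAdd y z)) (tAdd (tMul x y) (tMul x z))
| ue_cadd a b : ueq (tAdd (tC a) (tC b)) (tC (a + b))
| ue_cmul a b : ueq (tMul (tC a) (tC b)) (tC (a * b))
| ue_ccomm a x : ueq (tMul (tC a) x) (tMul x (tC a))
| ue_rel x y : urel x y -> ueq x y.

Definition K2pow (l : int) : term :=
  match l with Posz n => tpow K2 n | Negz n => tpow K2i n.+1 end.

Definition F3 := tSub (tMul F1 F2) (tMul (tC q) (tMul F2 F1)).

Definition Kt := tMul K1 (tMul K2 K2).
Definition Kti := tMul (tMul K2i K2i) K1i.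
Definition C1t :=
  tAdd (tMul F1 E1)
       (tMul (tC (qq ^+ 2)) (tAdd (tMul (tC q) K1) (tMul (tC q^-1) K1i))).

Inductive ck_syn : term -> Prop :=
| cks_C a : ck_syn (tC a)
| cks_K : ck_syn Kt
| cks_Ki : ck_syn Kti
| cks_C1 : ck_syn C1t
| cks_add x y : ck_syn x -> ck_syn y -> ck_syn (tAdd x y)
| cks_mul x y : ck_syn x -> ck_syn y -> ck_syn (tMul x y).

Definition inCK (x : term) : Prop := exists y, ck_syn y /\ ueq x y.

Definition is_CK_ideal (I : term -> Prop) : Prop :=
  [/\ (forall x y, ueq x y -> I x -> I y),
      (forall x, I x -> inCK x),
      I tZero,
      (forall x y, I x -> I y -> I (tAdd x y)) &
      (forall r x, inCK r -> I x -> I (tMul r x) /\ I (tMul x r))].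

Inductive left_ideal (G : term -> Prop) : term -> Prop :=
| li_gen g : G g -> left_ideal G g
| li_zero : left_ideal G tZero
| li_add x y : left_ideal G x -> left_ideal G y -> left_ideal G (tAdd x y)
| li_lmul u x : left_ideal G x -> left_ideal G (tMul u x)
| li_ueq x y : ueq x y -> left_ideal G x -> left_ideal G y.

Variable alpha : C.

Inductive pterm :=
| pE1 | pE2 | pC of C | pAdd of pterm & pterm | pMul of pterm & pterm.

Fixpoint pemb (p : pterm) : term :=
  match p with
  | pE1 => E1 | pE2 => E2 | pC a => tC a
  | pAdd x y => tAdd (pemb x) (pemb y)
  | pMul x y => tMul (pemb x) (pemb y)
  end.

Fixpoint eta (p : pterm) : C :=
  match p with
  | pE1 => alpha | pE2 => 0 | pC a => a
  | pAdd x y => eta x + eta y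
  | pMul x y => eta x * eta y
  end.

(* M(eta) = U (x)_{U^+} C v_eta = U / U.{x - eta(x) : x in U^+};
   the vector u v_eta is represented by the term u, and
   u v_eta = u' v_eta in M(eta) iff Mrel (u - u'). *)
Definition Mrel : term -> Prop :=
  left_ideal (fun t => exists p, t = tSub (pemb p) (tC (eta p))).

(* u v_eta lies in W(eta, I) = U I v_eta *)
Definition inW (I : term -> Prop) (u : term) : Prop :=
  exists y, left_ideal I y /\ Mrel (tSub u y).

End Uq.

(* Send M(eta) to the U-module of all functions f : Z^5 -> C, with f(j,k,l,a,b)
   read as the coefficient of F2^j F3^k K2^l K^a C1^b v_eta: the generators act
   by explicit formulas satisfying the defining relations of U, and u v_eta goes
   to u applied to the delta function at the origin.  The (j,k,l)-column (a
   function of (a,b)) of the image of w is then the (0,0,0)-column of the image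
   of Q_{j,k,l} v_eta.  Each generator acts on columns by combinations of columns
   shifted by K^{+-1} and C1, so every column of the image of U I v_eta is the
   (0,0,0)-column of the image of some element of I v_eta.  Finally C[K^{+-1}, C1]
   acts faithfully on the delta function, since K^a C1^b moves it to the point
   (a,b); hence Q_{j,k,l} lies in I. *)

From Pilot Require Import Defs.
From HB Require Import structures.
From mathcomp Require Import all_boot all_order all_algebra.
From mathcomp Require Import complex reals ring zify boolp.

Set Implicit Arguments.
Unset Strict Implicit.
Unset Printing Implicit Defensive.

Import Order.TTheory GRing.Theory Num.Theory.
Local Open Scope ring_scope.

Lemma commr_inverse (A : pzRingType) (x xi y : A) :
  x * xi = 1 -> xi * x = 1 -> GRing.comm x y -> GRing.comm xi y.
Proof.
move=> xxi xix xy; rewrite /GRing.comm -[xi * y]mulr1 -xxi mulrA -(mulrA xi) -xy.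
by rewrite !mulrA xix mul1r.
Qed.

Lemma sum_mulr_eq0_by_key (A : pzSemiRingType) (X : Type) (K : eqType)
    (key : X -> K) (c w : X -> A) (s : seq X) :
  (forall x y, key x = key y -> w x = w y) ->
  (forall k, \sum_(x <- s | key x == k) c x = 0) ->
  \sum_(x <- s) c x * w x = 0.
Proof.
move=> w_key; have [n] := ubnP (size s); elim: n s => // n IHn [|x0 s] size_s c_key.
  by rewrite big_nil.
rewrite (bigID (fun x => key x == key x0)) /=.
have -> : \sum_(x <- x0 :: s | key x == key x0) c x * w x = 0.
  rewrite (eq_bigr (fun x => c x * w x0)) => [|x /eqP /w_key -> //].
  by rewrite -mulr_suml c_key mul0r.
rewrite add0r -big_filter IHn //.
  by rewrite /= eqxx size_filter (leq_ltn_trans (count_size _ _)).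
move=> k; rewrite big_filter_cond; have [->|nk] := eqVneq k (key x0).
  by rewrite big1 // => x /andP [/negP].
rewrite -[RHS](c_key k); apply: eq_bigl => x.
by have [->|] := eqVneq (key x) k; rewrite ?andbT ?andbF // nk.
Qed.

(** * The algebra U as a quotient of terms *)

Section QuotientAlgebra.
Variables (R : realType) (q : R[i]).
Local Notation C := R[i].
Hypothesis q_neq0 : q != 0.

Definition U := {P : term R -> Prop | exists t, P = ueq q t}.

Definition uclass (t : term R) : U := exist _ (ueq q t) (ex_intro _ t erefl).
Definition urepr (x : U) : term R := proj1_sig (cid (proj2_sig x)).

Lemma U_ext (x y : U) : proj1_sig x = proj1_sig y -> x = y.
Proof. by case: x => P hP; case: y => P' hP' /= PP'; subst P'; congr exist. Qed.

Lemma uclass_eqP t t' : uclass t = uclass t' <-> ueq q t t'.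
Proof.
split=> [/(congr1 (@proj1_sig _ _)) /= -> | tt']; first exact: ue_refl.
apply: U_ext; apply: funext => x /=; apply: propext.
by split=> [tx | t'x]; [exact: ue_trans (ue_sym tt') tx | exact: ue_trans tt' t'x].
Qed.

Lemma urepr_uclass x : uclass (urepr x) = x.
Proof. by apply: U_ext; rewrite /urepr; case: cid => t /= ->. Qed.

Lemma uclassW (P : U -> Prop) : (forall t, P (uclass t)) -> forall x, P x.
Proof. by move=> Pt x; rewrite -(urepr_uclass x). Qed.

Lemma urepr_ueq t : ueq q (urepr (uclass t)) t.
Proof. by apply/uclass_eqP; rewrite urepr_uclass. Qed.

HB.instance Definition _ := gen_eqMixin U.
HB.instance Definition _ := gen_choiceMixin U.

Definition addU x y := uclass (tAdd (urepr x) (urepr y)).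
Definition oppU x := uclass (tMul (tC (-1)) (urepr x)).
Definition mulU x y := uclass (tMul (urepr x) (urepr y)).

Lemma addU_uclass t t' : addU (uclass t) (uclass t') = uclass (tAdd t t').
Proof. by apply/uclass_eqP; apply: ue_add; exact: urepr_ueq. Qed.

Lemma oppU_uclass t : oppU (uclass t) = uclass (tMul (tC (-1)) t).
Proof. by apply/uclass_eqP; apply: ue_mul; [exact: ue_refl | exact: urepr_ueq]. Qed.

Lemma mulU_uclass t t' : mulU (uclass t) (uclass t') = uclass (tMul t t').
Proof. by apply/uclass_eqP; apply: ue_mul; exact: urepr_ueq. Qed.

Lemma addUA : associative addU.
Proof.
elim/uclassW=> x; elim/uclassW=> y; elim/uclassW=> z.
by rewrite !addU_uclass; apply/uclass_eqP; exact: ue_addA.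
Qed.

Lemma addUC : commutative addU.
Proof.
elim/uclassW=> x; elim/uclassW=> y.
by rewrite !addU_uclass; apply/uclass_eqP; exact: ue_addC.
Qed.

Lemma add0U : left_id (uclass (tZero R)) addU.
Proof.
elim/uclassW=> x; rewrite addU_uclass; apply/uclass_eqP.
exact: ue_trans (ue_addC _ _ _) (ue_add0 _ _).
Qed.

Lemma addNU : left_inverse (uclass (tZero R)) oppU addU.
Proof.
elim/uclassW=> x; rewrite oppU_uclass addU_uclass; apply/uclass_eqP.
exact: ue_trans (ue_addC _ _ _) (ue_addN _ _).
Qed.

HB.instance Definition _ := GRing.isZmodule.Build U addUA addUC add0U addNU.

Lemma mulUA : associative mulU.
Proof.
elim/uclassW=> x; elim/uclassW=> y; elim/uclassW=> z.
by rewrite !mulU_uclass; apply/uclass_eqP; exact: ue_mulA.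
Qed.

Lemma mul1U : left_id (uclass (tOne R)) mulU.
Proof. by elim/uclassW=> x; rewrite mulU_uclass; apply/uclass_eqP; exact: ue_mul1l. Qed.

Lemma mulU1 : right_id (uclass (tOne R)) mulU.
Proof. by elim/uclassW=> x; rewrite mulU_uclass; apply/uclass_eqP; exact: ue_mul1r. Qed.

Lemma mulUDl : left_distributive mulU addU.
Proof.
elim/uclassW=> x; elim/uclassW=> y; elim/uclassW=> z.
by rewrite addU_uclass !mulU_uclass addU_uclass; apply/uclass_eqP; exact: ue_mulDl.
Qed.

Lemma mulUDr : right_distributive mulU addU.
Proof.
elim/uclassW=> x; elim/uclassW=> y; elim/uclassW=> z.
by rewrite addU_uclass !mulU_uclass addU_uclass; apply/uclass_eqP; exact: ue_mulDr.
Qed.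

HB.instance Definition _ := GRing.Zmodule_isPzRing.Build U mulUA mul1U mulU1 mulUDl mulUDr.

Lemma uclassD t t' : uclass (tAdd t t') = uclass t + uclass t'.
Proof. by rewrite -addU_uclass. Qed.

Lemma uclassM t t' : uclass (tMul t t') = uclass t * uclass t'.
Proof. by rewrite -mulU_uclass. Qed.

Lemma uclass_urel x y : urel q x y -> uclass x = uclass y.
Proof. by move=> xy; apply/uclass_eqP/ue_rel. Qed.

Definition uscal (c : C) : U := uclass (tC c).

Lemma uscal0 : uscal 0 = 0. Proof. by []. Qed.
Lemma uscal1 : uscal 1 = 1. Proof. by []. Qed.

Lemma uscalD c d : uscal (c + d) = uscal c + uscal d.
Proof. by rewrite /uscal -uclassD; apply/uclass_eqP/ue_sym/ue_cadd. Qed.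

Lemma uscalN c : uscal (- c) = - uscal c.
Proof. by apply/eqP; rewrite -subr_eq0 opprK -uscalD addNr uscal0. Qed.

Lemma uscalM c d : uscal (c * d) = uscal c * uscal d.
Proof. by rewrite /uscal -uclassM; apply/uclass_eqP/ue_sym/ue_cmul. Qed.

Lemma uscal_sum (I : Type) (r : seq I) (P : pred I) (F : I -> C) :
  uscal (\sum_(i <- r | P i) F i) = \sum_(i <- r | P i) uscal (F i).
Proof. exact: (big_morph uscal uscalD uscal0). Qed.

Lemma uscalC c x : GRing.comm (uscal c) x.
Proof.
by elim/uclassW: x => x; rewrite /GRing.comm /uscal -!uclassM; apply/uclass_eqP/ue_ccomm.
Qed.

Local Notation k1U := (uclass (K1 R)).
Local Notation k1iU := (uclass (K1i R)).
Local Notation k2U := (uclass (K2 R)).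
Local Notation k2iU := (uclass (K2i R)).
Local Notation f1U := (uclass (F1 R)).
Local Notation e1U := (uclass (E1 R)).
Local Notation kU := (uclass (Kt R)).
Local Notation kiU := (uclass (Kti R)).
Local Notation c1U := (uclass (C1t q)).

Definition qcomm (s : C) (x y : U) := x * y = uscal s * y * x.

Lemma qcomm_conj s x xi y : xi * x = 1 -> x * y * xi = uscal s * y -> qcomm s x y.
Proof. by move=> xix xyxi; rewrite /qcomm -[x * y]mulr1 -xix mulrA xyxi. Qed.

Lemma qcomm_urel x xi y s :
    urel q (tMul xi x) (tOne R) -> urel q (tMul (tMul x y) xi) (tMul (tC s) y) ->
  qcomm s (uclass x) (uclass y).
Proof.
move=> xix xyxi; apply: (qcomm_conj (xi := uclass xi)).
  by rewrite -uclassM (uclass_urel xix).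
by rewrite -!uclassM (uclass_urel xyxi).
Qed.

Lemma qcommM s s' x x' y : qcomm s x y -> qcomm s' x' y -> qcomm (s * s') (x * x') y.
Proof.
rewrite /qcomm => xy x'y; rewrite -mulrA x'y !mulrA -uscalC -(mulrA (uscal s')) xy.
by rewrite !mulrA -uscalM mulrC.
Qed.

Lemma qcomm1 x y : qcomm 1 x y -> GRing.comm x y.
Proof. by rewrite /qcomm uscal1 mul1r. Qed.

Lemma k1U_invr : k1U * k1iU = 1. Proof. by rewrite -uclassM (uclass_urel (r_K1a _)). Qed.
Lemma k1U_invl : k1iU * k1U = 1. Proof. by rewrite -uclassM (uclass_urel (r_K1b _)). Qed.
Lemma k2U_invr : k2U * k2iU = 1. Proof. by rewrite -uclassM (uclass_urel (r_K2a _)). Qed.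
Lemma k2U_invl : k2iU * k2U = 1. Proof. by rewrite -uclassM (uclass_urel (r_K2b _)). Qed.

Lemma kU_def : kU = k1U * (k2U * k2U). Proof. by rewrite !uclassM. Qed.
Lemma kiU_def : kiU = k2iU * k2iU * k1iU. Proof. by rewrite !uclassM. Qed.

Lemma kU_invr : kU * kiU = 1.
Proof.
rewrite kU_def kiU_def !mulrA -(mulrA _ k2U k2iU) k2U_invr mulr1.
by rewrite -(mulrA _ k2U k2iU) k2U_invr mulr1 k1U_invr.
Qed.

Lemma kU_invl : kiU * kU = 1.
Proof.
rewrite kU_def kiU_def !mulrA -(mulrA _ k1iU k1U) k1U_invl mulr1.
by rewrite -(mulrA _ k2iU k2U) k2U_invl mulr1 k2U_invl.
Qed.

Lemma kU_f1U : GRing.comm kU f1U.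
Proof.
have k1f1 : qcomm (q ^- 2) k1U f1U by apply: (qcomm_urel (xi := K1i R)); constructor.
have k2f1 : qcomm q k2U f1U by apply: (qcomm_urel (xi := K2i R)); constructor.
apply: qcomm1; have -> : 1 = q ^- 2 * (q * q) by field.
by rewrite kU_def; apply: qcommM => //; apply: qcommM.
Qed.

Lemma kU_e1U : GRing.comm kU e1U.
Proof.
have k1e1 : qcomm (q ^+ 2) k1U e1U by apply: (qcomm_urel (xi := K1i R)); constructor.
have k2e1 : qcomm q^-1 k2U e1U by apply: (qcomm_urel (xi := K2i R)); constructor.
apply: qcomm1; have -> : 1 = q ^+ 2 * (q^-1 * q^-1) by field.
by rewrite kU_def; apply: qcommM => //; apply: qcommM.
Qed.

Lemma kU_k1U : GRing.comm kU k1U.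
Proof.
have k1k2 : GRing.comm k1U k2U by rewrite /GRing.comm -!uclassM (uclass_urel (r_KK _)).
by rewrite kU_def; apply/commr_sym/commrM => //; apply: commrM.
Qed.

Lemma kU_k1iU : GRing.comm kU k1iU.
Proof. exact/commr_sym/(commr_inverse k1U_invr k1U_invl (commr_sym kU_k1U)). Qed.

Lemma c1U_def : c1U = f1U * e1U + uscal (qq q ^+ 2) * (uscal q * k1U + uscal q^-1 * k1iU).
Proof. by rewrite !(uclassD, uclassM). Qed.

Lemma kU_c1U : GRing.comm kU c1U.
Proof.
have kU_scal c : GRing.comm kU (uscal c) by apply/commr_sym/uscalC.
rewrite c1U_def; apply: commrD; first exact: commrM kU_f1U kU_e1U.
apply: commrM; first exact: kU_scal.
by apply: commrD; apply: commrM;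
  [exact: kU_scal | exact: kU_k1U | exact: kU_scal | exact: kU_k1iU].
Qed.

Lemma kiU_c1U : GRing.comm kiU c1U.
Proof. exact: commr_inverse kU_invr kU_invl kU_c1U. Qed.

Lemma kiU_kU_exprC n n' : GRing.comm (kiU ^+ n) (kU ^+ n').
Proof. by apply/commrX/commr_sym/commrX; rewrite /GRing.comm kU_invr kU_invl. Qed.

Lemma kU_kiU_expr n : kU ^+ n * kiU ^+ n = 1.
Proof. by rewrite -(exprMn_comm n (commr_sym (kiU_kU_exprC 1 1))) kU_invr expr1n. Qed.

Record monomial := Monomial { mexpK : nat; mexpKi : nat; mexpC1 : nat; mcoef : C }.

Definition umon (m : monomial) : U := kU ^+ mexpK m * kiU ^+ mexpKi m * c1U ^+ mexpC1 m.

Definition mweight (m : monomial) : int * int :=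
  ((mexpK m)%:Z - (mexpKi m)%:Z, (mexpC1 m)%:Z).

Definition monomial_mul (m m' : monomial) : monomial :=
  Monomial (mexpK m + mexpK m') (mexpKi m + mexpKi m') (mexpC1 m + mexpC1 m')
    (mcoef m * mcoef m').

Definition mopp (m : monomial) : monomial :=
  Monomial (mexpK m) (mexpKi m) (mexpC1 m) (- mcoef m).

Lemma umonM m m' : umon m * umon m' = umon (monomial_mul m m').
Proof.
case: m m' => a b c u [a' b' c' u']; rewrite /umon /=.
have c1_k : GRing.comm (c1U ^+ c) (kU ^+ a' * kiU ^+ b').
  by apply: commrM; apply/commr_sym/commrX/commr_sym/commrX/commr_sym;
    [exact: kU_c1U | exact: kiU_c1U].
transitivity (kU ^+ a * kiU ^+ b * (c1U ^+ c * (kU ^+ a' * kiU ^+ b')) * c1U ^+ c');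
  first by rewrite !mulrA.
rewrite c1_k.
transitivity (kU ^+ a * (kiU ^+ b * kU ^+ a') * kiU ^+ b' * (c1U ^+ c * c1U ^+ c'));
  first by rewrite !mulrA.
by rewrite kiU_kU_exprC !exprD !mulrA.
Qed.

Lemma umon_weight m m' : mweight m = mweight m' -> umon m = umon m'.
Proof.
case: m m' => a b c u [a' b' c' u'] [/= ab_eq <-{c'}].
have ab : (a + b' = a' + b)%N by clear -ab_eq; lia.
rewrite /umon /=; congr (_ * _).
transitivity (kU ^+ a * (kiU ^+ b * kU ^+ b') * kiU ^+ b');
  first by rewrite -!mulrA kU_kiU_expr mulr1.
rewrite kiU_kU_exprC.
transitivity (kU ^+ (a + b') * kiU ^+ (b + b')); first by rewrite !exprD !mulrA.
rewrite ab; transitivity (kU ^+ a' * (kU ^+ b * kiU ^+ b) * kiU ^+ b');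
  first by rewrite !exprD !mulrA.
by rewrite kU_kiU_expr mulr1.
Qed.

End QuotientAlgebra.

(** * A concrete model of M(eta) *)

Section Representation.
Variables (R : realType) (q alpha : R[i]).
Local Notation C := R[i].
Hypotheses (q_neq0 : q != 0) (q2_neq1 : q ^+ 2 != 1) (alpha_neq0 : alpha != 0).
Local Notation uclass := (uclass q).
Local Notation uscal := (uscal q).
Local Notation umon := (umon q).

(* [off x c = x + c], kept folded so that tactics can add up literal offsets. *)
Definition off (x c : int) : int := x + c.
Arguments off x c%_Z.

Lemma offA x c1 c2 : off (off x c1) c2 = off x (c1 + c2)%R.
Proof. by rewrite /off addrA. Qed.

Lemma off0 x : off x 0 = x.
Proof. by rewrite /off addr0. Qed.

Definition qpow (x : int) : C := q ^ x.

Lemma qpow_off x c : qpow (off x c) = qpow x * qpow c.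
Proof. exact: expfzDr. Qed.

Lemma qpow_neq0 x : qpow x != 0.
Proof. exact: expfz_neq0. Qed.

Lemma qpow_Posz n : qpow (Posz n) = q ^+ n. Proof. by []. Qed.
Lemma qpow_Negz n : qpow (Negz n) = (q ^+ n.+1)^-1. Proof. by []. Qed.

Lemma q_sub_qinv_neq0 : q - q^-1 != 0.
Proof.
apply: contraNneq q2_neq1 => /eqP; rewrite subr_eq0 => /eqP qE.
by rewrite expr2 {1}qE mulVf.
Qed.

Lemma qq_sub1_neq0 : q * q - 1 != 0.
Proof. by rewrite -expr2 subr_eq0. Qed.

Definition qint (x : int) : C := (qpow x - (qpow x)^-1) / (q - q^-1).

Definition vect := int -> int -> int -> int -> int -> C.

Lemma vect_ext (f g : vect) : (forall j k l a b, f j k l a b = g j k l a b) -> f = g.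
Proof. by move=> fg; do 5 apply: funext => ?. Qed.

Definition addv (f g : vect) : vect := fun j k l a b => f j k l a b + g j k l a b.
Definition scalev (c : C) (f : vect) : vect := fun j k l a b => c * f j k l a b.
Definition zerov : vect := fun _ _ _ _ _ => 0.

(* Read [f j k l a b] as the coefficient of F2^j F3^k K2^l K^a C1^b v_eta:
   the operators below are the action of the generators on M(eta) in these
   coordinates, with the formulas extended to all indices in Z^5. *)
Definition repK2 (f : vect) : vect := fun j k l a b =>
  (qpow j ^+ 2 * qpow k)^-1 * f j k (off l (-1)) a b.
Definition repK2i (f : vect) : vect := fun j k l a b =>
  qpow j ^+ 2 * qpow k * f j k (off l 1) a b.
Definition repK1 (f : vect) : vect := fun j k l a b =>
  qpow j / qpow k * f j k (off l 2) (off a (-1)) b.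
Definition repK1i (f : vect) : vect := fun j k l a b =>
  qpow k / qpow j * f j k (off l (-2)) (off a 1) b.
Definition repF2 (f : vect) : vect := fun j k l a b => f (off j (-1)) k l a b.
Definition repF1 (f : vect) : vect := fun j k l a b =>
  qint (off j 1) * f (off j 1) (off k (-1)) l a b
  + qpow j / (qpow k * qpow l * alpha) * f j k l a (off b (-1))
  - qq q ^+ 2 * q * (qpow j / (qpow k * qpow (off l 2) * alpha))
      * f j k (off l 2) (off a (-1)) b
  - qq q ^+ 2 / q * (qpow j / (qpow k * qpow (off l (-2)) * alpha))
      * f j k (off l (-2)) (off a 1) b.
Definition repE1 (f : vect) : vect := fun j k l a b =>
  alpha * qpow l * f j k l a b
  + qint (off k 1) * f (off j (-1)) (off k 1) (off l (-2)) (off a 1) b.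
Definition repE2 (f : vect) : vect := fun j k l a b =>
  qq q * qint (off j 1) / (qpow j * qpow k) * f (off j 1) k (off l (-1)) a b
  - qq q * qint (off j 1) * qpow j * qpow k * f (off j 1) k (off l 1) a b
  - q * qint (off k 1) / (qpow k * qpow l * alpha)
      * f j (off k 1) (off l (-1)) a (off b (-1))
  + qq q ^+ 2 * qint (off k 1) / (qpow k * qpow l * alpha)
      * f j (off k 1) (off l 1) (off a (-1)) b
  + qq q ^+ 2 * q ^+ 2 * qint (off k 1) / (qpow k * qpow l * alpha)
      * f j (off k 1) (off l (-3)) (off a 1) b.

Definition rep_gen (g : gen) : vect -> vect :=
  match g with
  | gE1 => repE1 | gE2 => repE2 | gF1 => repF1 | gF2 => repF2
  | gK1 => repK1 | gK1i => repK1i | gK2 => repK2 | gK2i => repK2i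
  end.

Fixpoint rep (t : term R) : vect -> vect :=
  match t with
  | tG g => rep_gen g
  | tC c => scalev c
  | tAdd x y => fun f => addv (rep x f) (rep y f)
  | tMul x y => fun f => rep x (rep y f)
  end.

Ltac is_nat_lit n := match n with O => idtac | S ?m => is_nat_lit m end.
Ltac is_int_lit x := match x with Posz ?n => is_nat_lit n | Negz ?n => is_nat_lit n end.

Ltac eval_int_lits :=
  repeat match goal with
  | |- context [(?c1 + ?c2)%R] => is_int_lit c1; is_int_lit c2;
      let c := eval vm_compute in (c1 + c2)%R in change (c1 + c2)%R with c
  | |- context [off ?c1 ?c2] => is_int_lit c1; is_int_lit c2;
      let c := eval vm_compute in (off c1 c2) in change (off c1 c2) with c
  | |- context [(- ?c1)%R] => is_int_lit c1;
      let c := eval vm_compute in (- c1)%R in change (- c1)%R with c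
  | |- context [?c1 == ?c2] => is_int_lit c1; is_int_lit c2;
      let c := eval vm_compute in (c1 == c2) in change (c1 == c2) with c
  end.

Ltac norm_index := repeat (rewrite ?offA ?off0; eval_int_lits); rewrite ?off0.

Ltac qfield :=
  rewrite /qint /qq ?qpow_off ?qpow_Posz ?qpow_Negz; field;
  rewrite ?qpow_neq0 ?q_sub_qinv_neq0 ?qq_sub1_neq0 ?q_neq0 ?alpha_neq0 //.

Lemma rep_urel x y : urel q x y -> rep x = rep y.
Proof.
case; rewrite /serre /tComm /tSub /tZero /tOne /E1 /E2 /F1 /F2 /K1 /K1i /K2 /K2i;
  apply: funext => f; apply: vect_ext => j k l a b /=;
  rewrite /scalev /addv /repE1 /repE2 /repF1 /repF2 /repK1 /repK1i /repK2 /repK2i;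
  norm_index; qfield.
Qed.

Lemma rep_addv x f g : rep x (addv f g) = addv (rep x f) (rep x g).
Proof.
elim: x f g => [[]|c|x IHx y IHy|x IHx y IHy] f g /=; rewrite ?IHx ?IHy //;
  apply: vect_ext => j k l a b;
  rewrite /addv /scalev /repE1 /repE2 /repF1 /repF2 /repK1 /repK1i /repK2 /repK2i; ring.
Qed.

Lemma rep_scalev x c f : rep x (scalev c f) = scalev c (rep x f).
Proof.
elim: x f => [[]|d|x IHx y IHy|x IHx y IHy] f /=; rewrite ?IHx ?IHy //;
  apply: vect_ext => j k l a b;
  rewrite /addv /scalev /repE1 /repE2 /repF1 /repF2 /repK1 /repK1i /repK2 /repK2i; ring.
Qed.

Lemma rep_ueq x y : ueq q x y -> rep x = rep y.
Proof.
have pointwise (F G : vect -> vect) :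
    (forall f j k l a b, F f j k l a b = G f j k l a b) -> F = G.
  by move=> FG; apply: funext => f; apply: vect_ext.
elim=> {x y} /=.
- by [].
- by move=> x y _ ->.
- by move=> x y z _ -> _ ->.
- by move=> x x' y y' _ -> _ ->.
- by move=> x x' y y' _ -> _ ->.
- by move=> *; apply: pointwise => *; rewrite /addv /=; ring.
- by move=> *; apply: pointwise => *; rewrite /addv /=; ring.
- by move=> *; apply: pointwise => *; rewrite /addv /scalev /=; ring.
- by move=> *; apply: pointwise => *; rewrite /addv /scalev /=; ring.
- by [].
- by move=> *; apply: pointwise => *; rewrite /scalev /=; ring.
- move=> x; apply: pointwise => f *; congr (rep x _ _ _ _ _ _).
  by apply: vect_ext => *; exact: mul1r.
- by [].
- by move=> x y z; apply: funext => f; exact: rep_addv.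
- by move=> *; apply: pointwise => *; rewrite /addv /scalev /=; ring.
- by move=> *; apply: pointwise => *; rewrite /scalev /=; ring.
- by move=> c x; apply: funext => f; rewrite rep_scalev.
- exact: rep_urel.
Qed.

Definition colv (j0 k0 l0 : int) (g : int -> int -> C) : vect :=
  fun j k l a b => if (j == j0) && (k == k0) && (l == l0) then g a b else 0.
Arguments colv (j0 k0 l0)%_Z g.

Definition col (f : vect) (j k l : int) : int -> int -> C := fun a b => f j k l a b.

Lemma colv_ext j k l g g' : (forall a b, g a b = g' a b) -> colv j k l g = colv j k l g'.
Proof. by move=> gg'; congr colv; do 2 apply: funext => ?. Qed.

Lemma addv_colv j k l g g' :
  addv (colv j k l g) (colv j k l g') = colv j k l (fun a b => g a b + g' a b).
Proof. by apply: vect_ext => *; rewrite /addv /colv; case: ifP; rewrite ?addr0. Qed.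

Lemma scalev_colv c j k l g : scalev c (colv j k l g) = colv j k l (fun a b => c * g a b).
Proof. by apply: vect_ext => *; rewrite /scalev /colv; case: ifP; rewrite ?mulr0. Qed.

Lemma off_eq x c y : (off x c == y) = (x == off y (- c)).
Proof. by rewrite /off -{1}(opprK c) subr_eq. Qed.

Lemma eq_off_self x c : (x == off x c) = (c == 0).
Proof. by rewrite /off -subr_eq0 opprD addrA subrr add0r oppr_eq0. Qed.

Lemma off_eq_self x c : (off x c == x) = (c == 0).
Proof. by rewrite eq_sym eq_off_self. Qed.

Lemma off_eq_off x c1 c2 : (off x c1 == off x c2) = (c1 == c2).
Proof. by rewrite (inj_eq (addrI x)). Qed.

Ltac simpl_index_tests :=
  rewrite ?off_eq; norm_index; rewrite ?eq_off_self ?off_eq_self ?off_eq_off ?eqxx;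
  norm_index; rewrite /= ?andbT ?andbF /=.

(* Split on every test [x == y] with [x] an index variable, substituting [x] in
   the positive case. *)
Ltac case_index_tests :=
  repeat (simpl_index_tests;
    match goal with
    | |- context [?x == ?y] => is_var x;
        case: (eqVneq x y) => [?|?]; [subst x | rewrite ?(negbTE _ : (x == y) = false) //]
    end);
  simpl_index_tests.

Ltac colv_compute :=
  rewrite /= /colv /scalev /addv /zerov /repE1 /repE2 /repF1 /repF2 /repK1 /repK1i
    /repK2 /repK2i;
  norm_index; case_index_tests; try done; qfield.

Lemma rep_F2_colv j0 k0 l0 g : rep (F2 R) (colv j0 k0 l0 g) = colv (j0 + 1) k0 l0 g.
Proof. apply: vect_ext => j k l a b; rewrite -[j0 + 1]/(off j0 1); colv_compute. Qed.

Lemma rep_F3_colv k0 l0 g : rep (F3 q) (colv 0 k0 l0 g) = colv 0 (k0 + 1) l0 g.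
Proof.
rewrite /F3 /tSub /F1 /F2; apply: vect_ext => j k l a b.
rewrite -[k0 + 1]/(off k0 1); colv_compute.
Qed.

Lemma rep_K2_colv l0 g : rep (K2 R) (colv 0 0 l0 g) = colv 0 0 (l0 + 1) g.
Proof. apply: vect_ext => j k l a b; rewrite -[l0 + 1]/(off l0 1); colv_compute. Qed.

Lemma rep_K2i_colv l0 g : rep (K2i R) (colv 0 0 l0 g) = colv 0 0 (l0 - 1) g.
Proof. apply: vect_ext => j k l a b; rewrite -[l0 - 1]/(off l0 (-1)); colv_compute. Qed.

Lemma rep_E1_colv g : rep (E1 R) (colv 0 0 0 g) = scalev alpha (colv 0 0 0 g).
Proof. apply: vect_ext => j k l a b; colv_compute. Qed.

Lemma rep_E2_colv g : rep (E2 R) (colv 0 0 0 g) = zerov.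
Proof. apply: vect_ext => j k l a b; colv_compute. Qed.

Lemma rep_Kt_colv g : rep (Kt R) (colv 0 0 0 g) = colv 0 0 0 (fun a b => g (a - 1) b).
Proof.
rewrite /Kt /K1 /K2; apply: vect_ext => j k l a b.
rewrite /colv -[a - 1]/(off a (-1)) -/(colv 0 0 0 g); colv_compute.
Qed.

Lemma rep_Kti_colv g : rep (Kti R) (colv 0 0 0 g) = colv 0 0 0 (fun a b => g (a + 1) b).
Proof.
rewrite /Kti /K1i /K2i; apply: vect_ext => j k l a b.
rewrite /colv -[a + 1]/(off a 1) -/(colv 0 0 0 g); colv_compute.
Qed.

Lemma rep_C1_colv g : rep (C1t q) (colv 0 0 0 g) = colv 0 0 0 (fun a b => g a (b - 1)).
Proof.
rewrite /C1t /F1 /E1 /K1 /K1i; apply: vect_ext => j k l a b.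
rewrite /colv -[b - 1]/(off b (-1)) -/(colv 0 0 0 g); colv_compute.
Qed.

Definition nf_act (L : seq (monomial R)) (g : int -> int -> C) : int -> int -> C :=
  fun a b => \sum_(m <- L) mcoef m * g (a - (mweight m).1) (b - (mweight m).2).

Lemma nf_act_cat L L' g a b : nf_act (L ++ L') g a b = nf_act L g a b + nf_act L' g a b.
Proof. exact: big_cat. Qed.

Lemma ck_syn_normal_form s : ck_syn q s -> exists L : seq (monomial R),
  uclass s = \sum_(m <- L) uscal (mcoef m) * umon m /\
  forall g, rep s (colv 0 0 0 g) = colv 0 0 0 (nf_act L g).
Proof.
have single t m : uclass t = uscal (mcoef m) * umon m ->
    (forall g, rep t (colv 0 0 0 g) = colv 0 0 0 (nf_act [:: m] g)) ->
    exists L, uclass t = \sum_(m <- L) uscal (mcoef m) * umon m /\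
      forall g, rep t (colv 0 0 0 g) = colv 0 0 0 (nf_act L g).
  by move=> t_nf t_rep; exists [:: m]; rewrite big_seq1.
elim=> {s} [c | | | | x y _ [L1 [x_nf x_rep]] _ [L2 [y_nf y_rep]]
              | x y _ [L1 [x_nf x_rep]] _ [L2 [y_nf y_rep]]].
- apply: (single _ (Monomial 0 0 0 c)).
    by rewrite /umon /= ?uscal1 ?expr1 ?expr0 ?mul1r ?mulr1.
  move=> g; rewrite /= scalev_colv; apply: colv_ext => a b.
  by rewrite /nf_act big_seq1 /= !subr0.
- apply: (single _ (Monomial 1 0 0 1)).
    by rewrite /umon /= ?uscal1 ?expr1 ?expr0 ?mul1r ?mulr1.
  move=> g; rewrite rep_Kt_colv; apply: colv_ext => a b.
  by rewrite /nf_act big_seq1 /= mul1r; congr (g _ _); lia.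
- apply: (single _ (Monomial 0 1 0 1)).
    by rewrite /umon /= ?uscal1 ?expr1 ?expr0 ?mul1r ?mulr1.
  move=> g; rewrite rep_Kti_colv; apply: colv_ext => a b.
  by rewrite /nf_act big_seq1 /= mul1r; congr (g _ _); lia.
- apply: (single _ (Monomial 0 0 1 1)).
    by rewrite /umon /= ?uscal1 ?expr1 ?expr0 ?mul1r ?mulr1.
  move=> g; rewrite rep_C1_colv; apply: colv_ext => a b.
  by rewrite /nf_act big_seq1 /= mul1r; congr (g _ _); lia.
- exists (L1 ++ L2); split; first by rewrite uclassD x_nf y_nf big_cat.
  move=> g /=; rewrite x_rep y_rep addv_colv; apply: colv_ext => a b.
  by rewrite nf_act_cat.
- exists [seq monomial_mul m1 m2 | m1 <- L1, m2 <- L2]; split.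
    rewrite uclassM x_nf y_nf big_allpairs_dep mulr_suml; apply: eq_bigr => m1 _.
    rewrite mulr_sumr; apply: eq_bigr => m2 _; rewrite -(umonM q_neq0) /= uscalM.
    by rewrite -mulrA (mulrA (umon m1)) -uscalC !mulrA.
  move=> g /=; rewrite y_rep x_rep; apply: colv_ext => a b.
  rewrite /nf_act big_allpairs_dep; apply: eq_bigr => m1 _.
  rewrite mulr_sumr; apply: eq_bigr => m2 _; rewrite /= mulrA; congr (_ * g _ _); lia.
Qed.

Definition delta0 (a b : int) : C := ((a == 0) && (b == 0))%:R.
Definition veta : vect := colv 0 0 0 delta0.

Lemma nf_act_delta0 L a b :
  nf_act L delta0 a b = \sum_(m <- L | mweight m == (a, b)) mcoef m.
Proof.
rewrite big_mkcond; apply: eq_bigr => m _; rewrite /delta0 /mweight /= !subr_eq0.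
by rewrite xpair_eqE (eq_sym a) (eq_sym b); case: (_ && _); rewrite ?mulr1 ?mulr0.
Qed.

Lemma ck_syn_rep_inj s s' :
  ck_syn q s -> ck_syn q s' -> rep s veta = rep s' veta -> ueq q s s'.
Proof.
move=> /ck_syn_normal_form [L [s_nf s_rep]] /ck_syn_normal_form [L' [s'_nf s'_rep]].
rewrite /veta s_rep s'_rep => nfE.
have {}nfE a b : nf_act L delta0 a b = nf_act L' delta0 a b.
  by have := congr1 (fun f => f 0 0 0 a b) nfE; rewrite /colv /=.
apply/uclass_eqP/eqP; rewrite -subr_eq0 s_nf s'_nf -sumrN.
have -> : \sum_(m <- L') - (uscal (mcoef m) * umon m) =
          \sum_(m <- [seq mopp m | m <- L']) uscal (mcoef m) * umon m.
  by rewrite big_map; apply: eq_bigr => m _; rewrite uscalN mulNr.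
(* Monomials of equal weight are equal in U, and [nf_act _ delta0] at (a, b)
   is the total coefficient of weight (a, b). *)
rewrite -big_cat; apply/eqP/(sum_mulr_eq0_by_key (key := @mweight R)) => [m m'|[a b]].
  exact: umon_weight.
rewrite -uscal_sum big_cat big_map /= sumrN.
by rewrite -!nf_act_delta0 nfE subrr uscal0.
Qed.

Lemma scalev1 f : scalev 1 f = f.
Proof. by apply: vect_ext => *; rewrite /scalev mul1r. Qed.

Lemma rep_zerov x : rep x zerov = zerov.
Proof.
have scale0 f : scalev 0 f = zerov by apply: vect_ext => *; rewrite /scalev mul0r.
by rewrite -(scale0 zerov) rep_scalev scale0.
Qed.

Lemma rep_pemb p g :
  rep (pemb p) (colv 0 0 0 g) = scalev (Defs.eta alpha p) (colv 0 0 0 g).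
Proof.
elim: p => [| |c|x IHx y IHy|x IHx y IHy].
- exact: rep_E1_colv.
- by rewrite [LHS]rep_E2_colv; apply: vect_ext => *; rewrite /scalev mul0r.
- by [].
- by rewrite /= IHx IHy; apply: vect_ext => *; rewrite /addv /scalev mulrDl.
- rewrite /= IHy rep_scalev IHx; apply: vect_ext => *.
  by rewrite /scalev mulrA [Defs.eta _ x * _]mulrC.
Qed.

Lemma Mrel_rep_veta x : Mrel q alpha x -> rep x veta = zerov.
Proof.
elim=> {x} [_ [p ->] | | x y _ x0 _ y0 | u x _ x0 | x y xy _ x0] /=.
- rewrite /veta rep_pemb; apply: vect_ext => * /=; rewrite /addv /scalev /=; ring.
- by apply: vect_ext => *; rewrite /scalev mul0r.
- by rewrite x0 y0; apply: vect_ext => *; rewrite /addv addr0.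
- by rewrite x0 rep_zerov.
- by rewrite -(rep_ueq xy).
Qed.

Lemma Mrel_sub_rep_veta x y : Mrel q alpha (tSub x y) -> rep x veta = rep y veta.
Proof.
move=> /Mrel_rep_veta xy0; apply: vect_ext => j k l a b.
have := congr1 (fun f => f j k l a b) xy0; rewrite /= /addv /scalev /zerov.
by rewrite mulN1r => /eqP; rewrite subr_eq0 => /eqP.
Qed.

Lemma col_colv j0 k0 l0 g j k l :
  col (colv j0 k0 l0 g) j k l =
    if (j == j0) && (k == k0) && (l == l0) then g else (fun _ _ => 0).
Proof. by rewrite /col /colv; case: ifP. Qed.

Lemma inCK_rep_veta t : inCK q t -> rep t veta = colv 0 0 0 (col (rep t veta) 0 0 0).
Proof.
move=> [s [/ck_syn_normal_form [L [_ s_rep]] ts]].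
by rewrite (rep_ueq ts) /veta s_rep col_colv.
Qed.

Lemma inCK_rep_inj t t' : inCK q t -> inCK q t' -> rep t veta = rep t' veta -> ueq q t t'.
Proof.
move=> [s [cs ts]] [s' [cs' ts']]; rewrite (rep_ueq ts) (rep_ueq ts') => ss'.
exact: ue_trans ts (ue_trans (ck_syn_rep_inj cs cs' ss') (ue_sym ts')).
Qed.

Lemma ck_syn_inCK s : ck_syn q s -> inCK q s.
Proof. by move=> cks; exists s; split=> //; exact: ue_refl. Qed.

Section IdealColumns.
Variable I : term R -> Prop.
Hypothesis I_ideal : is_CK_ideal q I.

Definition Icolumn (g : int -> int -> C) := exists2 t, I t & rep t veta = colv 0 0 0 g.

Lemma Icolumn_ext g g' : (forall a b, g a b = g' a b) -> Icolumn g -> Icolumn g'.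
Proof. by move=> gg'; have -> : g = g' by do 2 apply: funext => ?. Qed.

Lemma Icolumn0 : Icolumn (fun _ _ => 0).
Proof.
case: I_ideal => _ _ I0 _ _; exists (tZero R) => //.
by apply: vect_ext => *; rewrite /= /scalev /colv mul0r; case: ifP.
Qed.

Lemma IcolumnD g g' : Icolumn g -> Icolumn g' -> Icolumn (fun a b => g a b + g' a b).
Proof.
case: I_ideal => _ _ _ ID _ [t It tg] [t' It' t'g'].
by exists (tAdd t t'); [exact: ID | rewrite /= tg t'g' addv_colv].
Qed.

Lemma Icolumn_mull s g g' :
  inCK q s -> rep s (colv 0 0 0 g) = colv 0 0 0 g' -> Icolumn g -> Icolumn g'.
Proof.
case: I_ideal => _ _ _ _ IM cks sg [t It tg].
by exists (tMul s t); [case: (IM s t cks It) | rewrite /= tg].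
Qed.

Lemma IcolumnZ c g : Icolumn g -> Icolumn (fun a b => c * g a b).
Proof. by apply: (Icolumn_mull (ck_syn_inCK (cks_C _ c))); rewrite /= scalev_colv. Qed.

Lemma IcolumnN g : Icolumn g -> Icolumn (fun a b => - g a b).
Proof. by move=> /(IcolumnZ (-1)); apply: Icolumn_ext => a b; rewrite mulN1r. Qed.

Lemma Icolumn_shiftK g : Icolumn g -> Icolumn (fun a b => g (off a (-1)) b).
Proof. exact: (Icolumn_mull (ck_syn_inCK (cks_K q)) (rep_Kt_colv g)). Qed.

Lemma Icolumn_shiftKi g : Icolumn g -> Icolumn (fun a b => g (off a 1) b).
Proof. exact: (Icolumn_mull (ck_syn_inCK (cks_Ki q)) (rep_Kti_colv g)). Qed.

Lemma Icolumn_shiftC1 g : Icolumn g -> Icolumn (fun a b => g a (off b (-1))).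
Proof. exact: (Icolumn_mull (ck_syn_inCK (cks_C1 q)) (rep_C1_colv g)). Qed.

Definition Icolumns (f : vect) := forall j k l, Icolumn (col f j k l).

(* Each column of [rep u f] is a combination of columns of [f] with
   coefficients in C[K^{+-1}, C1], and these preserve [Icolumn]. *)
Lemma Icolumns_rep u f : Icolumns f -> Icolumns (rep u f).
Proof.
elim: u f => [g|c|x IHx y IHy|x IHx y IHy] f If j k l /=.
- case: g; rewrite /col /= /repE1 /repE2 /repF1 /repF2 /repK1 /repK1i /repK2 /repK2i;
  repeat first [ apply: IcolumnD | apply: IcolumnN | apply: IcolumnZ
               | apply: Icolumn_shiftK | apply: Icolumn_shiftKi | apply: Icolumn_shiftC1 ];
  exact: If.
- exact: IcolumnZ.
- exact: IcolumnD (IHx f If j k l) (IHy f If j k l).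
- exact: IHx _ (IHy f If) j k l.
Qed.

Lemma left_ideal_Icolumns y : left_ideal q I y -> Icolumns (rep y veta).
Proof.
elim=> {y} [t It | | x y _ Ix _ Iy | u x _ Ix | x y xy _ Ix] j k l.
- have [_ Ick _ _ _] := I_ideal.
  rewrite (inCK_rep_veta (Ick t It)) col_colv; case: ifP => _; last exact: Icolumn0.
  by exists t; last exact: inCK_rep_veta (Ick t It).
- by apply: (Icolumn_ext _ Icolumn0) => a b; rewrite /col /= /scalev mul0r.
- exact: IcolumnD (Ix j k l) (Iy j k l).
- exact: (Icolumns_rep u Ix).
- by rewrite -(rep_ueq xy).
Qed.

Lemma Icolumn_inCK t : inCK q t -> Icolumn (col (rep t veta) 0 0 0) -> I t.
Proof.
have [I_ueq Ick _ _ _] := I_ideal.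
move=> ckt [t' It' t'E]; apply: I_ueq (It'); apply: inCK_rep_inj (Ick _ It') (ckt) _.
by rewrite t'E -(inCK_rep_veta ckt).
Qed.

End IdealColumns.

Lemma rep_tpow0 t f : rep (tpow t 0) f = f.
Proof. exact: scalev1. Qed.

Lemma rep_tpowS t n f : rep (tpow t n.+1) f = rep t (rep (tpow t n) f).
Proof. by []. Qed.

Lemma rep_F2pow_colv (j : nat) k l g : rep (tpow (F2 R) j) (colv 0 k l g) = colv j k l g.
Proof.
elim: j => [|j IHj]; first exact: rep_tpow0.
by rewrite rep_tpowS IHj rep_F2_colv; congr colv; lia.
Qed.

Lemma rep_F3pow_colv (k : nat) l g : rep (tpow (F3 q) k) (colv 0 0 l g) = colv 0 k l g.
Proof.
elim: k => [|k IHk]; first exact: rep_tpow0.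
by rewrite rep_tpowS IHk rep_F3_colv; congr colv; lia.
Qed.

Lemma rep_K2pow_colv l g : rep (K2pow R l) (colv 0 0 0 g) = colv 0 0 l g.
Proof.
have K2i_pow n : rep (tpow (K2i R) n) (colv 0 0 0 g) = colv 0 0 (- n%:Z) g.
  elim: n => [|n IHn]; first exact: rep_tpow0.
  by rewrite rep_tpowS IHn rep_K2i_colv; congr colv; lia.
case: l => n; last first.
  by change (K2pow R (Negz n)) with (tpow (K2i R) n.+1); rewrite K2i_pow NegzE.
change (K2pow R n) with (tpow (K2 R) n); elim: n => [|n IHn]; first exact: rep_tpow0.
by rewrite rep_tpowS IHn rep_K2_colv; congr colv; lia.
Qed.

Section Summands.
Variable Q : nat -> nat -> int -> term R.
Hypothesis Q_inCK : forall j k l, inCK q (Q j k l).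

Definition summand (p : nat * nat * int) : term R :=
  tMul (tMul (tMul (tpow (F2 R) p.1.1) (tpow (F3 q) p.1.2)) (K2pow R p.2))
    (Q p.1.1 p.1.2 p.2).

Lemma rep_summand p :
  rep (summand p) veta = colv p.1.1 p.1.2 p.2 (col (rep (Q p.1.1 p.1.2 p.2) veta) 0 0 0).
Proof.
rewrite [LHS]/= (inCK_rep_veta (Q_inCK _ _ _)).
by rewrite rep_K2pow_colv rep_F3pow_colv rep_F2pow_colv.
Qed.

Lemma rep_tsum_summand S (j k : nat) l a b :
  rep (tsum S summand) veta j k l a b =
  \sum_(p <- S | p == (j, k, l)) col (rep (Q p.1.1 p.1.2 p.2) veta) 0 0 0 a b.
Proof.
elim: S => [|p S IHS]; first by rewrite big_nil /= /scalev mul0r.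
have -> : rep (tsum (p :: S) summand) veta =
          addv (rep (summand p) veta) (rep (tsum S summand) veta) by [].
rewrite big_cons /addv rep_summand IHS /colv.
case: p => [[pj pk] pl] /=; rewrite !eqz_nat !xpair_eqE (eq_sym j) (eq_sym k) (eq_sym l).
by case: ifP; rewrite ?add0r.
Qed.

Lemma col_rep_tsum S j k l : uniq S -> (j, k, l) \in S ->
  col (rep (tsum S summand) veta) j k l = col (rep (Q j k l) veta) 0 0 0.
Proof.
move=> S_uniq jkl_S; do 2 apply: funext => ?.
by rewrite /col rep_tsum_summand -big_filter (filter_pred1_uniq S_uniq jkl_S) big_seq1.
Qed.

End Summands.

End Representation.

Theorem lemma3p3 (R : realType) (q alpha : R[i])
  (hq0 : q != 0) (hq : forall n : nat, (0 < n)%N -> q ^+ n != 1)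
  (halpha : alpha != 0)
  (I : term R -> Prop) (hI : is_CK_ideal q I)
  (Q : nat -> nat -> int -> term R)
  (hQ : forall j k l, inCK q (Q j k l))
  (S : seq (nat * nat * int)) (hS : uniq S)
  (hsupp : forall j k l, (j, k, l) \notin S -> ueq q (Q j k l) (tZero R)) :
  inW q alpha I
    (tsum S (fun p => tMul (tMul (tMul (tpow (F2 R) p.1.1) (tpow (F3 q) p.1.2))
                                 (K2pow R p.2)) (Q p.1.1 p.1.2 p.2)))
  <-> (forall j k l, I (Q j k l)).
Proof.
have q2_neq1 : q ^+ 2 != 1 by exact: hq.
have [I_ueq _ I0 _ _] := hI.
split=> [[y [Iy wy]] j k l | IQ].
- have [jkl_S | jkl_notS] := boolP ((j, k, l) \in S); last first.
    exact: I_ueq (ue_sym (hsupp _ _ _ jkl_notS)) I0.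
  apply: (Icolumn_inCK hq0 q2_neq1 halpha hI (hQ j k l)).
  rewrite -(col_rep_tsum hq0 q2_neq1 halpha hQ hS jkl_S).
  rewrite (Mrel_sub_rep_veta hq0 q2_neq1 halpha wy).
  exact: left_ideal_Icolumns.
- exists (tsum S (summand q Q)); split.
    elim: {hS hsupp} S => [|p S IHS]; first exact: li_zero.
    by apply: li_add => //; apply/li_lmul/li_gen/IQ.
  exact: li_ueq (ue_sym (ue_addN _ _)) (li_zero _ _).
Qed.
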